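(* Let $A$ and $B$ be complex square matrices, not necessarily of the same size, with identical pseudospectra, i.e. $\|(zI-A)^{-1}\|=\|(zI-B)^{-1}\|$ for all $z\in\mathbb{C}$. Then the largest eigenvalue of $\operatorname{Re}A$ equals the largest eigenvalue of $\operatorname{Re}B$, and the smallest eigenvalue of $\operatorname{Re}A$ equals the smallest eigenvalue of $\operatorname{Re}B$.
   Context: $\operatorname{Re}T=(T+T^* )/2$. $\|\cdot\|$ is the spectral norm; by convention $\|(zI-T)^{-1}\|=\infty$ for $z$ an eigenvalue of $T$ (with the identity matrices $I$ of the appropriate sizes). *)

From HB Require Import structures.
From mathcomp Require Import all_boot all_order all_algebra.
From mathcomp Require Import complex.
From mathcomp Require Import classical_sets reals constructive_ereal.
Set Implicit Arguments. Unset Strict Implicit. Unset Printing Implicit Defensive.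
Import Order.TTheory GRing.Theory Num.Theory.
Local Open Scope ring_scope.
Local Open Scope classical_set_scope.

Definition adjmx (R : realType) m n (A : 'M[R[i]]_(m, n)) : 'M[R[i]]_(n, m) :=
  \matrix_(i, j) conjc (A j i).

(* Hermitian part  Re T = (T + T^* ) / 2 *)
Definition herm_part (R : realType) n (T : 'M[R[i]]_n) : 'M[R[i]]_n :=
  (2%:R)^-1 *: (T + adjmx T).

Definition vnorm (R : realType) n (x : 'cV[R[i]]_n) : R :=
  Num.sqrt (\sum_(k < n) (complex.Re (x k 0) ^+ 2 + complex.Im (x k 0) ^+ 2)).

Definition opnorm (R : realType) m n (A : 'M[R[i]]_(m, n)) : R :=
  sup [set vnorm (A *m x) | x in [set x : 'cV[R[i]]_n | vnorm x = 1]].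

Definition resolvent_norm (R : realType) n (T : 'M[R[i]]_n) (z : R[i]) : \bar R :=
  if (z%:M - T) \in unitmx then ((opnorm (invmx (z%:M - T)))%:E)%E else (+oo)%E.

Definition is_max_eig (R : realType) n (H : 'M[R[i]]_n) (l : R) : Prop :=
  eigenvalue H ((l%:C)%C) /\ forall mu : R[i], eigenvalue H mu -> mu <= (l%:C)%C.
Definition is_min_eig (R : realType) n (H : 'M[R[i]]_n) (l : R) : Prop :=
  eigenvalue H ((l%:C)%C) /\ forall mu : R[i], eigenvalue H mu -> (l%:C)%C <= mu.

From HB Require Import structures.
From mathcomp Require Import all_boot all_order all_algebra.
From mathcomp Require Import complex spectral sesquilinear.
From mathcomp Require Import classical_sets reals constructive_ereal.
From mathcomp Require Import ring lra.
Import Order.TTheory GRing.Theory Num.Theory.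
Set Implicit Arguments. Unset Strict Implicit. Unset Printing Implicit Defensive.
Local Open Scope ring_scope.
Local Open Scope complex_scope.
Local Open Scope sesquilinear_scope.

(* For real t and x a vector,
     ||(t - T) x||^2 = t^2 ||x||^2 - 2 t <(Re T) x, x> + ||T x||^2.
   If l is the largest eigenvalue of Re T, then <(Re T) x, x> <= l ||x||^2, so for large t
     ||(t - T)^-1||^2 <= 1 / (t^2 - 2 t l),
   while an l-eigenvector x0 of Re T gives
     ||(t - T)^-1||^2 >= ||x0||^2 / ((t^2 - 2 t l) ||x0||^2 + ||T x0||^2).
   If the largest eigenvalues of Re A and Re B differed, these bounds, for A and B at one
   large real t, would contradict ||(t - A)^-1|| = ||(t - B)^-1||.  The smallest eigenvalues
   are the opposites of the largest ones of Re (-A) and Re (-B), whose resolvent norms are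
   those of A and B reflected through 0. *)

Lemma delta_mx_neq0 (F : nzRingType) m n (i : 'I_m) (j : 'I_n) :
  delta_mx i j != 0 :> 'M[F]_(m, n).
Proof. by apply/negP => /eqP/matrixP/(_ i j)/eqP; rewrite !mxE !eqxx oner_eq0. Qed.

Lemma eigenvalue_similar_diag (F : fieldType) n (P : 'M[F]_n) (d : 'rV[F]_n) a :
  P \in unitmx -> eigenvalue (invmx P *m diag_mx d *m P) a = [exists j, a == d 0 j].
Proof.
move=> Pu; apply/eigenvalueP/existsP => [[v vH v0] | [j /eqP ->]].
  set w := v *m invmx P.
  have wD : w *m diag_mx d = a *: w.
    by rewrite /w scalemxAl -vH !mulmxA mulmxK.
  have [j wj] : exists j, w 0 j != 0.
    apply/existsP; apply: contraNT v0; rewrite negb_exists => /forallP w0.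
    rewrite -[v](mulmxKV Pu) -/w; suff w_eq0 : w = 0 by rewrite w_eq0 mul0mx.
    by apply/matrixP => i k; rewrite ord1 [RHS]mxE; apply/eqP/negPn/w0.
  clearbody w; exists j; move/matrixP/(_ 0 j): wD.
  rewrite mul_mx_diag !mxE mulrC => /eqP.
  by rewrite (inj_eq (mulIf wj)) eq_sym.
exists (delta_mx 0 j *m P); last by rewrite mulmx_free_eq0 ?row_free_unit // delta_mx_neq0.
rewrite !mulmxA mulmxK // scalemxAl; congr (_ *m _).
apply/rowP => k; rewrite mul_mx_diag !mxE eqxx.
by have [->|] := eqVneq k j; rewrite ?mulr1 ?mul1r ?mulr0 ?mul0r.
Qed.

Lemma eigenvalueN (F : fieldType) n (H : 'M[F]_n) a :
  eigenvalue (- H) (- a) = eigenvalue H a.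
Proof.
apply/eigenvalueP/eigenvalueP => -[v vH v_neq0]; exists v => //.
  by apply: oppr_inj; rewrite -mulmxN vH scaleNr.
by rewrite mulmxN vH scaleNr.
Qed.

Lemma unitmxN (F : fieldType) n (M : 'M[F]_n) : (- M \in unitmx) = (M \in unitmx).
Proof. by rewrite -scaleN1r unitmxZ ?unitrN1. Qed.

(* No invertibility hypothesis: [invmx] is the identity outside [unitmx]. *)
Lemma invmxN (F : fieldType) n (M : 'M[F]_n) : invmx (- M) = - invmx M.
Proof.
have [M_unit|M_nunit] := boolP (M \in unitmx).
  by rewrite -scaleN1r invmxZ ?unitmxZ ?unitrN1 // invrN1 scaleN1r.
by rewrite !invmx_out // inE unitmxN.
Qed.

Section Adjoint.
Variable R : realType.

Lemma adjmxE m n (A : 'M[R[i]]_(m, n)) : adjmx A = A ^t*.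
Proof. by apply/matrixP => i j; rewrite !mxE. Qed.

Lemma herm_partE n (T : 'M[R[i]]_n) : herm_part T = 2%:R^-1 *: (T + T ^t*).
Proof. by rewrite /herm_part adjmxE. Qed.

Lemma herm_part_hermitian n (T : 'M[R[i]]_n) : herm_part T \is hermsymmx.
Proof.
apply/is_hermitianmxP; rewrite expr0 scale1r herm_partE.
apply/matrixP => i j; rewrite !mxE rmorphM rmorphD fmorphV rmorph_nat /=.
by rewrite conjCK addrC.
Qed.

Lemma herm_partN n (T : 'M[R[i]]_n) : herm_part (- T) = - herm_part T.
Proof. by rewrite !herm_partE raddfN map_mxN -opprD scalerN. Qed.

End Adjoint.

Section SquaredNorm.
Variable R : realType.

Definition sqnorm n (x : 'cV[R[i]]_n) : R :=
  \sum_(k < n) (complex.Re (x k 0) ^+ 2 + complex.Im (x k 0) ^+ 2).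

Lemma vnormE n (x : 'cV[R[i]]_n) : vnorm x = Num.sqrt (sqnorm x).
Proof. by []. Qed.

Lemma mul_conjC_self (z : R[i]) : z^* * z = (complex.Re z ^+ 2 + complex.Im z ^+ 2)%:C.
Proof.
by case: z => a b; apply/eqP; rewrite eq_complex /=; apply/andP; split; apply/eqP; ring.
Qed.

Lemma sqnorm_dotE n (x : 'cV[R[i]]_n) : (sqnorm x)%:C = (x ^t* *m x) 0 0.
Proof. by rewrite mxE rmorph_sum; apply: eq_bigr => k _; rewrite !mxE mul_conjC_self. Qed.

Lemma sqnorm_ge0 n (x : 'cV[R[i]]_n) : 0 <= sqnorm x.
Proof. by apply: sumr_ge0 => k _; rewrite addr_ge0 ?sqr_ge0. Qed.

Lemma sqnorm0 n : sqnorm (0 : 'cV[R[i]]_n) = 0.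
Proof. by rewrite /sqnorm big1 // => k _; rewrite mxE expr0n addr0. Qed.

Lemma sqnorm_gt0 n (x : 'cV[R[i]]_n) : (0 < sqnorm x) = (x != 0).
Proof.
rewrite lt_def sqnorm_ge0 andbT; congr negb; apply/eqP/eqP => [|->]; last exact: sqnorm0.
move/eqP; rewrite psumr_eq0 => [/allP x0|k _]; last by rewrite addr_ge0 ?sqr_ge0.
apply/matrixP => k j; rewrite ord1 mxE.
have /x0 := mem_index_enum k; rewrite /= paddr_eq0 ?sqr_ge0 // !sqrf_eq0.
by case: (x k 0) => a b /andP[/eqP/= -> /eqP/= ->].
Qed.

Lemma sqnormZ n (a : R) (x : 'cV[R[i]]_n) : sqnorm (a%:C *: x) = a ^+ 2 * sqnorm x.
Proof.
rewrite /sqnorm mulr_sumr; apply: eq_bigr => k _; rewrite !mxE.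
by case: (x k 0) => u v /=; ring.
Qed.

Lemma sqnormN n (x : 'cV[R[i]]_n) : sqnorm (- x) = sqnorm x.
Proof. by apply: eq_bigr => k _; rewrite !mxE; case: (x k 0) => u v /=; ring. Qed.

Lemma sqnorm_unitary n (P : 'M[R[i]]_n) (x : 'cV[R[i]]_n) :
  P \is unitarymx -> sqnorm (P *m x) = sqnorm x.
Proof.
move=> Pu; apply: (@complexI R); rewrite !sqnorm_dotE trmx_mul map_mxM.
by rewrite mulmxA -(mulmxA _ _ P) -invmx_unitary // mulVmx ?unitarymx_unit ?mulmx1.
Qed.

Lemma sqnorm_scaleB n (t : R) (x y : 'cV[R[i]]_n) :
  sqnorm (t%:C *: x - y) =
  t ^+ 2 * sqnorm x - 2%:R * t * complex.Re ((x ^t* *m y) 0 0) + sqnorm y.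
Proof.
rewrite /sqnorm mxE raddf_sum !mulr_sumr -sumrB -big_split /=.
apply: eq_bigr => k _; rewrite !mxE.
by case: (x k 0) (y k 0) => a b [c d] /=; ring.
Qed.

Lemma sqr_vnorm n (x : 'cV[R[i]]_n) : vnorm x ^+ 2 = sqnorm x.
Proof. by rewrite vnormE sqr_sqrtr ?sqnorm_ge0. Qed.

Lemma vnorm_normalize n (x : 'cV[R[i]]_n) :
  x != 0 -> vnorm ((Num.sqrt (sqnorm x))^-1%:C *: x) = 1.
Proof.
rewrite -sqnorm_gt0 => x_gt0.
by rewrite vnormE sqnormZ exprVn sqr_sqrtr ?mulVf ?sqrtr1 ?ltW ?gt_eqF.
Qed.

End SquaredNorm.

Section OperatorNorm.
Variables (R : realType) (m n : nat) (N : 'M[R[i]]_(m, n)) (c : R).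
(* [opnorm] is a [sup], which is junk on an unbounded set. *)
Hypothesis N_bounded : forall x, sqnorm (N *m x) <= c * sqnorm x.

Let unit_image := [set vnorm (N *m x) | x in [set x : 'cV[R[i]]_n | vnorm x = 1]]%classic.

Let unit_image_ub : ubound unit_image (Num.sqrt c).
Proof.
move=> _ [y /= y1 <-]; rewrite vnormE ler_wsqrtr //.
by rewrite -[c]mulr1 -(expr1n _ 2) -y1 sqr_vnorm N_bounded.
Qed.

Let vnorm_le_opnorm x : vnorm x = 1 -> vnorm (N *m x) <= opnorm N.
Proof. by move=> x1; apply: ub_le_sup; [exists (Num.sqrt c) | exists x]. Qed.

Lemma sqnorm_le_opnorm x : sqnorm (N *m x) <= opnorm N ^+ 2 * sqnorm x.
Proof.
have [->|x0] := eqVneq x 0; first by rewrite mulmx0 !sqnorm0 mulr0.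
have /vnorm_le_opnorm Nx_le := vnorm_normalize x0.
have := Nx_le; rewrite -(ler_pXn2r (n := 2)) ?nnegrE ?vnormE ?sqrtr_ge0 //; last first.
  exact: le_trans (sqrtr_ge0 _) Nx_le.
rewrite -vnormE sqr_vnorm -scalemxAr sqnormZ exprVn sqr_sqrtr ?sqnorm_ge0 //.
by rewrite mulrC ler_pdivrMr // sqnorm_gt0.
Qed.

Lemma opnorm_le : (0 < n)%N -> opnorm N ^+ 2 <= c.
Proof.
move=> n_gt0; pose e0 : 'cV[R[i]]_n := delta_mx (Ordinal n_gt0) 0.
have /vnorm_normalize e1 : e0 != 0 by apply: delta_mx_neq0.
set e := _ *: e0 in e1; have Ne_le := vnorm_le_opnorm e1.
have c_ge0 : 0 <= c.
  by rewrite -[c]mulr1 -(expr1n _ 2) -e1 sqr_vnorm (le_trans (sqnorm_ge0 _) (N_bounded _)).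
have N_ge0 : 0 <= opnorm N by rewrite (le_trans _ Ne_le) // vnormE sqrtr_ge0.
rewrite -[c]sqr_sqrtr // ler_pXn2r ?nnegrE ?sqrtr_ge0 //.
by apply: ge_sup unit_image_ub; exists (vnorm (N *m e)), e.
Qed.

End OperatorNorm.

Lemma opnormN (R : realType) m n (N : 'M[R[i]]_(m, n)) : opnorm (- N) = opnorm N.
Proof.
rewrite /opnorm; congr (sup [set _ | _ in _]%classic).
by apply: boolp.funext => x; rewrite mulNmx !vnormE sqnormN.
Qed.

Definition qform (R : realType) n (H : 'M[R[i]]_n) (x : 'cV[R[i]]_n) : R :=
  complex.Re ((x ^t* *m H *m x) 0 0).

Section Hermitian.
Variables (R : realType) (n : nat) (H : 'M[R[i]]_n).
Hypothesis H_herm : H \is hermsymmx.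

Let P := spectralmx H.
Let d := spectral_diag H.

Let P_unitary : P \is unitarymx. Proof. exact: spectral_unitarymx. Qed.

Let H_spectral : H = invmx P *m diag_mx d *m P.
Proof. exact/orthomx_spectralP/hermitian_normalmx. Qed.

Let d_real j : d 0 j = (complex.Re (d 0 j))%:C.
Proof.
by apply/esym/RRe_real; move/mxOverP: (hermitian_spectral_diag_real H_herm); apply.
Qed.

Let eigenvalue_H a : eigenvalue H a = [exists j, a == d 0 j].
Proof. by rewrite [in LHS]H_spectral eigenvalue_similar_diag ?unitarymx_unit. Qed.

Let qform_spectral x :
  qform H x = \sum_k complex.Re (d 0 k) *
    (complex.Re ((P *m x) k 0) ^+ 2 + complex.Im ((P *m x) k 0) ^+ 2).
Proof.
rewrite /qform; have -> : x ^t* *m H *m x = (P *m x) ^t* *m diag_mx d *m (P *m x).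
  by rewrite H_spectral invmx_unitary // trmx_mul map_mxM !mulmxA.
move: (P *m x) => y; rewrite mul_mx_diag mxE.
under eq_bigr => k _ do rewrite !mxE mulrAC mul_conjC_self d_real -rmorphM mulrC.
by rewrite -rmorph_sum.
Qed.

Lemma qform_le_max_eig l : is_max_eig H l -> forall x, qform H x <= l * sqnorm x.
Proof.
move=> [_ H_max] x; rewrite qform_spectral -(sqnorm_unitary x P_unitary) mulr_sumr.
apply: ler_sum => k _; rewrite ler_wpM2r ?addr_ge0 ?sqr_ge0 //.
have : eigenvalue H (d 0 k) by rewrite eigenvalue_H; apply/existsP; exists k.
by move/H_max; rewrite d_real lecR.
Qed.

Lemma max_eig_exists : (0 < n)%N -> exists l, is_max_eig H l.
Proof.
move=> n_gt0; pose re_d j := complex.Re (d 0 j).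
have [j _ j_max] := @arg_maxP _ _ _ (Ordinal n_gt0) xpredT re_d isT.
exists (re_d j); split; first by rewrite -d_real eigenvalue_H; apply/existsP; exists j.
by move=> mu; rewrite eigenvalue_H => /existsP[k /eqP ->]; rewrite d_real lecR; apply: j_max.
Qed.

Lemma hermitian_eigenvector (l : R) : eigenvalue H l%:C ->
  exists2 x : 'cV_n, x != 0 & H *m x = l%:C *: x.
Proof.
case/eigenvalueP => v vH v0; exists (v ^t*).
  by apply: contra v0 => /eqP v0; rewrite -[v]trmxCK v0 trmx0 map_mx0.
have H_adj : H ^t* = H by move/is_hermitianmxP: H_herm; rewrite expr0 scale1r => /esym.
by rewrite -{1}H_adj -map_mxM -trmx_mul vH linearZ map_mxZ; congr (_ *: _); apply: conjc_real.
Qed.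

End Hermitian.

Lemma qform_herm_part (R : realType) n (T : 'M[R[i]]_n) x :
  qform (herm_part T) x = complex.Re ((x ^t* *m (T *m x)) 0 0).
Proof.
rewrite /qform herm_partE -scalemxAr -scalemxAl mulmxDr mulmxDl mxE mxE.
have -> : x ^t* *m T ^t* *m x = (x ^t* *m (T *m x)) ^t*.
  by rewrite !trmx_mul !map_mxM trmxCK.
by rewrite -mulmxA [(_ ^t*) 0 0]mxE [(_ ^T) 0 0]mxE mulrC -ReJ_add.
Qed.

Lemma sqnorm_shift_mul (R : realType) n (T : 'M[R[i]]_n) (t : R) x :
  sqnorm (((t%:C)%:M - T) *m x) =
  t ^+ 2 * sqnorm x - 2%:R * t * qform (herm_part T) x + sqnorm (T *m x).
Proof. by rewrite mulmxBl mul_scalar_mx sqnorm_scaleB qform_herm_part. Qed.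

Lemma coercive_unitmx (R : realType) n (M : 'M[R[i]]_n) c :
  0 < c -> (forall x, c * sqnorm x <= sqnorm (M *m x)) -> M \in unitmx.
Proof.
move=> c_gt0 M_coercive; rewrite unitmxE unitfE -det_tr.
apply/negP => /det0P[v v_neq0 vM].
have Mv : M *m v^T = 0 by rewrite -[M]trmxK -trmx_mul vM trmx0.
have := M_coercive v^T; rewrite Mv sqnorm0.
by rewrite pmulr_rle0 // leNgt sqnorm_gt0 trmx_eq0 v_neq0.
Qed.

Lemma sqnorm_invmx_le (R : realType) n (M : 'M[R[i]]_n) c :
  0 < c -> (forall x, c * sqnorm x <= sqnorm (M *m x)) ->
  forall y, sqnorm (invmx M *m y) <= c^-1 * sqnorm y.
Proof.
move=> c_gt0 M_coercive y; have M_unit := coercive_unitmx c_gt0 M_coercive.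
by rewrite ler_pdivlMl // -{2}(mulKVmx M_unit y).
Qed.

Section ResolventBounds.
Variables (R : realType) (n : nat) (T : 'M[R[i]]_n.+1) (l t : R).
Hypothesis qform_le : forall x, qform (herm_part T) x <= l * sqnorm x.
Hypotheses (t_gt0 : 0 < t) (gap_gt0 : 0 < t ^+ 2 - 2%:R * t * l).

Let M := (t%:C)%:M - T.

Let shift_coercive x : (t ^+ 2 - 2%:R * t * l) * sqnorm x <= sqnorm (M *m x).
Proof.
rewrite sqnorm_shift_mul; have := sqnorm_ge0 (T *m x).
have : 0 <= 2%:R * t * (l * sqnorm x - qform (herm_part T) x).
  by rewrite !mulr_ge0 ?subr_ge0 ?qform_le ?ltW.
lra.
Qed.

Lemma shift_unitmx : M \in unitmx.
Proof. exact: coercive_unitmx gap_gt0 shift_coercive. Qed.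

Lemma opnorm_resolvent_le : opnorm (invmx M) ^+ 2 * (t ^+ 2 - 2%:R * t * l) <= 1.
Proof.
rewrite -ler_pdivlMr // div1r; apply: opnorm_le => //.
exact: sqnorm_invmx_le gap_gt0 shift_coercive.
Qed.

Lemma sqnorm_le_opnorm_resolvent x0 : herm_part T *m x0 = l%:C *: x0 ->
  sqnorm x0 <=
  opnorm (invmx M) ^+ 2 * ((t ^+ 2 - 2%:R * t * l) * sqnorm x0 + sqnorm (T *m x0)).
Proof.
move=> x0_eig; have qform_x0 : qform (herm_part T) x0 = l * sqnorm x0.
  by rewrite /qform -mulmxA x0_eig -scalemxAr mxE -sqnorm_dotE -rmorphM.
have := sqnorm_le_opnorm (sqnorm_invmx_le gap_gt0 shift_coercive) (M *m x0).
by rewrite mulKmx ?shift_unitmx // sqnorm_shift_mul qform_x0 mulrBl mulrA.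
Qed.

End ResolventBounds.

Lemma max_eig_le_of_resolvent (R : realType) n m
    (A : 'M[R[i]]_n.+1) (B : 'M[R[i]]_m.+1) (a b : R) :
  (forall x, qform (herm_part A) x <= a * sqnorm x) ->
  (forall x, qform (herm_part B) x <= b * sqnorm x) ->
  (exists2 x0 : 'cV_m.+1, x0 != 0 & herm_part B *m x0 = b%:C *: x0) ->
  (forall t : R, resolvent_norm A t%:C = resolvent_norm B t%:C) -> b <= a.
Proof.
move=> A_le B_le [x0 x0_neq0 x0_eig] AB; rewrite leNgt; apply/negP => a_lt_b.
set s := sqnorm x0; set c := sqnorm (B *m x0).
have s_gt0 : 0 < s by rewrite sqnorm_gt0.
have c_ge0 : 0 <= c by apply: sqnorm_ge0.
have ba_s_gt0 : 0 < (b - a) * s by rewrite mulr_gt0 ?subr_gt0.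
(* Large enough for both gaps to be positive and for [c < 2 t (b - a) s]; the resolvent
   bounds for [A] and [B] at [t] then force the common resolvent norm to vanish. *)
pose t := 1 + 2%:R * `|a| + 2%:R * `|b| + c / ((b - a) * s).
have na := normr_ge0 a; have nb := normr_ge0 b.
have k_ge0 : 0 <= c / ((b - a) * s) by rewrite divr_ge0 // ltW.
have c_lt : c < t * ((b - a) * s) by rewrite -ltr_pdivrMr // /t; lra.
have t_gt0 : 0 < t by rewrite /t; lra.
have gap_gt0 x : `|x| * 2%:R < t -> 0 < t ^+ 2 - 2%:R * t * x.
  have -> : t ^+ 2 - 2%:R * t * x = t * (t - 2%:R * x) by ring.
  by move=> x_lt; rewrite mulr_gt0 // subr_gt0; have := ler_norm x; lra.
have gapA : 0 < t ^+ 2 - 2%:R * t * a by apply: gap_gt0; rewrite /t; lra.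
have gapB : 0 < t ^+ 2 - 2%:R * t * b by apply: gap_gt0; rewrite /t; lra.
have := AB t; rewrite /resolvent_norm (shift_unitmx A_le t_gt0 gapA).
rewrite (shift_unitmx B_le t_gt0 gapB) => -[r_eq].
have upA := opnorm_resolvent_le A_le t_gt0 gapA.
have loB := sqnorm_le_opnorm_resolvent B_le t_gt0 gapB x0_eig.
rewrite -r_eq -/s -/c in loB; set r2 := opnorm _ ^+ 2 in upA loB.
have : r2 * (2%:R * (t * ((b - a) * s)) - c) <= 0.
  have := ler_wpM2r (ltW s_gt0) upA; rewrite mul1r.
  have -> : r2 * (2%:R * (t * ((b - a) * s)) - c) =
    r2 * (t ^+ 2 - 2%:R * t * a) * s - r2 * ((t ^+ 2 - 2%:R * t * b) * s + c) by ring.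
  lra.
rewrite pmulr_lle0; last by have := mulr_gt0 t_gt0 ba_s_gt0; lra.
move=> r2_le0; have r2_eq0 : r2 = 0 by apply/le_anti; rewrite r2_le0 sqr_ge0.
by move: loB; rewrite r2_eq0 mul0r; lra.
Qed.

Lemma max_eig_eq_of_resolvent (R : realType) n m
    (A : 'M[R[i]]_n.+1) (B : 'M[R[i]]_m.+1) (a b : R) :
  is_max_eig (herm_part A) a -> is_max_eig (herm_part B) b ->
  (forall t : R, resolvent_norm A t%:C = resolvent_norm B t%:C) -> a = b.
Proof.
move=> maxA maxB AB; have hA := herm_part_hermitian A; have hB := herm_part_hermitian B.
have [xA xA_neq0 xA_eig] := hermitian_eigenvector hA maxA.1.
have [xB xB_neq0 xB_eig] := hermitian_eigenvector hB maxB.1.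
have leA := qform_le_max_eig hA maxA; have leB := qform_le_max_eig hB maxB.
apply/le_anti/andP; split.
- by apply: (max_eig_le_of_resolvent leB leA) => [|t]; [exists xA | rewrite AB].
- by apply: (max_eig_le_of_resolvent leA leB) => //; exists xB.
Qed.

Lemma min_eig_of_max_eigN (R : realType) n (H : 'M[R[i]]_n) l :
  is_max_eig (- H) l -> is_min_eig H (- l).
Proof.
rewrite /is_min_eig /is_max_eig raddfN /= -(eigenvalueN H) opprK.
move=> [l_eig l_max]; split=> [|mu]; first exact: l_eig.
rewrite -(eigenvalueN H) lerNl; exact: l_max.
Qed.

Lemma resolvent_normN (R : realType) n (T : 'M[R[i]]_n) z :
  resolvent_norm (- T) z = resolvent_norm T (- z).
Proof.
rewrite /resolvent_norm; have -> : z%:M - - T = - ((- z)%:M - T).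
  by apply/matrixP => i j; rewrite !mxE mulNrn opprB !opprK addrC.
by rewrite unitmxN invmxN opnormN.
Qed.

Theorem lemma7 (R : realType) (n m : nat)
  (A : 'M[R[i]]_n.+1) (B : 'M[R[i]]_m.+1)
  (hAB : forall z : R[i], resolvent_norm A z = resolvent_norm B z) :
  (exists l : R, is_max_eig (herm_part A) l /\ is_max_eig (herm_part B) l) /\
  (exists l : R, is_min_eig (herm_part A) l /\ is_min_eig (herm_part B) l).
Proof.
have [a maxA] := max_eig_exists (herm_part_hermitian A) (ltn0Sn n).
have [b maxB] := max_eig_exists (herm_part_hermitian B) (ltn0Sn m).
have [a' maxNA] := max_eig_exists (herm_part_hermitian (- A)) (ltn0Sn n).
have [b' maxNB] := max_eig_exists (herm_part_hermitian (- B)) (ltn0Sn m).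
have ab : a = b := max_eig_eq_of_resolvent maxA maxB (fun t => hAB _).
have ab' : a' = b'.
  by apply: max_eig_eq_of_resolvent maxNA maxNB _ => t; rewrite !resolvent_normN hAB.
move: maxNA maxNB; rewrite !herm_partN => maxNA maxNB.
split.
  exists a; split; first exact: maxA.
  rewrite ab; exact: maxB.
exists (- a'); split; first exact: min_eig_of_max_eigN maxNA.
rewrite ab'; exact: min_eig_of_max_eigN maxNB.
Qed.
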